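(* Let $z\in(0,+\infty)^{d_1}\times\{0\}^{d_2}$. Then: (1) the maps $\alpha\mapsto\mathbb{E}[S^{\mathcal C}_\alpha(z)]$ and $\alpha\mapsto\sigma^{\mathcal C}_\alpha(z)$ are non-increasing on $[0,\infty)$; (2) $\lim_{\alpha\to0}\mathbb{E}[S^{\mathcal C}_\alpha(z)]=\mathbb{E}[S^{\mathcal C}_0(z)]$; (3) $\lim_{\alpha\to0}\sigma^{\mathcal C}_\alpha(z)=\sigma^{\mathcal C}_0(z)$.
   Context: Fix $d_1\ge1$, $d_2\ge0$. $\xi$ is a Poisson point process on $\mathbb{R}^{d_1}\times\mathbb{Z}^{d_2}$ with intensity Lebesgue $\otimes$ counting measure; $\mathrm{Proj}^{d_2}$ is the projection on the $\mathbb{Z}^{d_2}$ coordinates. For $\alpha\ge0$: $x\prec_\alpha y$ iff $x_i+\alpha^{1/d_1}<y_i$ for all $i\le d_1$; $x\preceq y$ iff $x_i\le y_i$ for all $i\le d_1$. For $z\in(0,+\infty)^{d_1}\times\{0\}^{d_2}$, $\mathcal{C}_\alpha(z)$ is the set of finite sequences $s=(w(1),\dots,w(k))$, $k\ge0$, of points of $\xi$ with $0\preceq w(1)\prec_\alpha\cdots\prec_\alpha w(k)\prec_\alpha z$; with $w(0)=0,w(k+1)=z$, $V(s)=\sum_{i=1}^{k+1}\|\mathrm{Proj}^{d_2}(w(i))-\mathrm{Proj}^{d_2}(w(i-1))\|_1$, $R(s)=k$, $S^{\mathcal C}_\alpha(z)=\sup_{s\in\mathcal{C}_\alpha(z)}(R(s)-V(s))$,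 and $\sigma^{\mathcal C}_\alpha(z)=\lim_{\lambda\to\infty}\frac1\lambda\mathbb{E}[S^{\mathcal C}_\alpha(\lambda z)]=\sup_{\lambda>0}\frac1\lambda\mathbb{E}[S^{\mathcal C}_\alpha(\lambda z)]\in(0,\infty]$. *)

From HB Require Import structures.
From mathcomp Require Import all_boot all_order all_algebra.
From mathcomp Require Import all_classical all_reals all_analysis.
Set Implicit Arguments. Unset Strict Implicit. Unset Printing Implicit Defensive.
Import Order.TTheory GRing.Theory Num.Theory.
Import numFieldNormedType.Exports.
Local Open Scope classical_set_scope.
Local Open Scope ring_scope.

Section Defs.
Variables (R : realType) (d1 d2 : nat).

Definition pt := ('rV[R]_d1 * 'rV[int]_d2)%type.

Definition origin : pt := (0, 0).

Definition ptR (zr : 'rV[R]_d1) : pt := (zr, 0).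

Definition prec_alpha (alpha : R) (x y : pt) : Prop :=
  forall i : 'I_d1, x.1 ord0 i + alpha `^ (d1%:R^-1) < y.1 ord0 i.

Definition preceq (x y : pt) : Prop :=
  forall i : 'I_d1, x.1 ord0 i <= y.1 ord0 i.

Definition l1Z (v : 'rV[int]_d2) : R := (\sum_(i < d2) `|v ord0 i|)%:~R.

Fixpoint linked (alpha : R) (w : pt) (s : seq pt) (z : pt) : Prop :=
  match s with
  | [::] => prec_alpha alpha w z
  | y :: s' => prec_alpha alpha w y /\ linked alpha y s' z
  end.

Definition is_chain (X : set pt) (alpha : R) (z : pt) (s : seq pt) : Prop :=
  (forall w, w \in s -> X w) /\
  match s with
  | [::] => True
  | w :: s' => preceq origin w /\ linked alpha w s' z
  end.

(* V(s) with w(0) = prev and w(k+1) = z *)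
Fixpoint Vfrom (prev : pt) (s : seq pt) (z : pt) : R :=
  match s with
  | [::] => l1Z (z.2 - prev.2)
  | w :: s' => l1Z (w.2 - prev.2) + Vfrom w s' z
  end.

Definition Vchain (s : seq pt) (z : pt) : R := Vfrom origin s z.

Definition S_C (X : set pt) (alpha : R) (z : pt) : \bar R :=
  ereal_sup [set ((size s)%:R - Vchain s z)%:E | s in is_chain X alpha z].

Record box := Box { box_a : 'rV[R]_d1; box_b : 'rV[R]_d1; box_k : 'rV[int]_d2 }.

Definition box_set (B : box) : set pt :=
  [set x : pt | (forall i : 'I_d1, box_a B ord0 i <= x.1 ord0 i < box_b B ord0 i)
           /\ x.2 = box_k B].

(* (Lebesgue x counting)-measure of a box *)
Definition box_vol (B : box) : R :=
  \prod_(i < d1) Num.max 0 (box_b B ord0 i - box_a B ord0 i).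

Definition count_pts (X : set pt) (A : set pt) : \bar R :=
  (\esum_(x in X `&` A) (1 : \bar R))%E.

(* Poisson probability mass function, correct also for rate 0 *)
Definition pois (r : R) (n : nat) : R := r ^+ n / n`!%:R * expR (- r).

(* xi : Omega -> set pt is a Poisson point process of intensity
   Lebesgue (x) counting measure: for pairwise disjoint boxes B_1..B_n the
   counts are jointly distributed as independent Poisson variables with
   means the volumes of the boxes. *)
Definition is_PPP (dm : measure_display) (Omega : measurableType dm)
  (P : probability Omega R) (xi : Omega -> set pt) : Prop :=
  forall (n : nat) (B : 'I_n -> box) (m : 'I_n -> nat),
    (forall i j, i != j -> box_set (B i) `&` box_set (B j) = set0) ->
    let E := [set w | forall i, count_pts (xi w) (box_set (B i)) = (m i)%:R%:E] in
    measurable E /\ P E = (\prod_(i < n) pois (box_vol (B i)) (m i))%:E.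

Definition ES_C (dm : measure_display) (Omega : measurableType dm)
  (P : probability Omega R) (xi : Omega -> set pt) (alpha : R) (z : pt) : \bar R :=
  (\int[P]_w S_C (xi w) alpha z)%E.

Definition sigma_C (dm : measure_display) (Omega : measurableType dm)
  (P : probability Omega R) (xi : Omega -> set pt) (alpha : R) (zr : 'rV[R]_d1)
  : \bar R :=
  ereal_sup [set (lam^-1)%:E * ES_C P xi alpha (ptR (lam *: zr)) | lam in [set l : R | (0 < l)%R]]%E.

End Defs.

(* Pathwise, a chain for a spacing alpha is also a chain for every smaller
   spacing, so S^C_alpha(z) is nonincreasing in alpha; conversely all the
   chain conditions are strict inequalities, so a chain for spacing 0 is
   still a chain for every small positive spacing, whence
   S^C_0 = sup_n S^C_{alpha_n} along a sequence alpha_n decreasing to 0.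
   To integrate these pathwise facts, S^C_alpha(z) must be measurable: by
   the same openness, every chain can be fattened into a finite sequence of
   boxes with rational corners such that any choice of one point per box is
   again a chain of the same value; hence S^C is a countable supremum of
   functions of the events "xi meets the box B", which are measurable by the
   Poisson property.  Monotonicity of the expectation follows, and monotone
   convergence gives E[S^C_0] = sup_{a > 0} E[S^C_a]; exchanging suprema gives
   the same for sigma^C.  Finally a nonincreasing function whose value at 0
   is its supremum over (0, +oo) is right-continuous at 0. *)

From HB Require Import structures.
From mathcomp Require Import all_boot all_order all_algebra.
From mathcomp Require Import all_classical all_reals all_analysis.
From mathcomp Require Import lra measurable_realfun.
Set Implicit Arguments. Unset Strict Implicit. Unset Printing Implicit Defensive.
Import Order.TTheory GRing.Theory Num.Theory.
Import numFieldNormedType.Exports.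
Local Open Scope classical_set_scope.
Local Open Scope ring_scope.

Fixpoint pointwise {A B : Type} (rel : A -> B -> Prop) (s : seq A) (t : seq B) : Prop :=
  match s, t with
  | [::], [::] => True
  | x :: s', y :: t' => rel x y /\ pointwise rel s' t'
  | _, _ => False
  end.

Section Pointwise.
Context {A B : Type}.

Lemma pointwise_size (rel : A -> B -> Prop) s t : pointwise rel s t -> size s = size t.
Proof. by elim: s t => [|x s IH] [|y t] //= [_ /IH ->]. Qed.

Lemma pointwise_impl (rel rel' : A -> B -> Prop) s t :
  (forall x y, rel x y -> rel' x y) -> pointwise rel s t -> pointwise rel' s t.
Proof. by move=> h; elim: s t => [|x s IH] [|y t] //= [/h ? /IH]. Qed.

Lemma pointwise_refl (rel : A -> A -> Prop) s :
  (forall x, rel x x) -> pointwise rel s s.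
Proof. by move=> h; elim: s => //= x s ->; split. Qed.

Lemma pointwise_exists (rel : A -> B -> Prop) :
  (forall x, exists y, rel x y) -> forall s, exists t, pointwise rel s t.
Proof.
move=> h; elim => [|x s [t Ht]]; first by exists [::].
by have [y Hy] := h x; exists (y :: t).
Qed.

Lemma pointwise_map {C : Type} (f : A -> C) (g : B -> C) s t :
  pointwise (fun x y => f x = g y) s t -> map f s = map g t.
Proof. by elim: s t => [|x s IH] [|y t] //= [-> /IH ->]. Qed.

End Pointwise.

Lemma pointwise_trans {A B C : Type} (r1 : A -> C -> Prop) (r2 : B -> C -> Prop)
  (r3 : A -> B -> Prop) s t u :
  (forall x y z, r1 x z -> r2 y z -> r3 x y) ->
  pointwise r1 s u -> pointwise r2 t u -> pointwise r3 s t.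
Proof.
move=> h; elim: s t u => [|x s IH] [|y t] [|z u] //= [h1 h1'] [h2 h2'].
by split; [exact: h h1 h2 | exact: IH h1' h2'].
Qed.

Lemma pointwise_mem {A B : eqType} (rel : A -> B -> Prop) s t y :
  pointwise rel s t -> y \in t -> exists2 x, x \in s & rel x y.
Proof.
elim: s t => [|x s IH] [|z t] //= [hxz hst].
rewrite in_cons => /orP[/eqP ->|/(IH _ hst) [w ws rw]].
  by exists x; rewrite ?mem_head.
by exists w; rewrite // in_cons ws orbT.
Qed.

Lemma finite_pos_lower_bound (R : realType) (n : nat) (g : 'I_n -> R) :
  (forall i, 0 < g i) -> exists2 e, 0 < e & forall i, e <= g i.
Proof.
move=> g0.
have : \forall e \near (0:R)^'+, forall i, e <= g i.
  apply: filter_forall => i; near=> e.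
  by apply: ltW; near: e; exact: nbhs_right_lt.
move=> [r /= r0 H]; exists (r / 2); first by rewrite divr_gt0.
apply: H; last by rewrite divr_gt0.
rewrite /= sub0r normrN gtr0_norm ?divr_gt0 //.
by rewrite ltr_pdivrMr // ltr_pMr // ltr1n.
Unshelve. all: by end_near. Qed.

Lemma nonincr_cvg_at_right0 (R : realType) (f : R -> \bar R) :
  (forall a b : R, 0 <= a -> a <= b -> (f b <= f a)%E) ->
  (forall M, (forall a : R, 0 < a -> (f a <= M)%E) -> (f 0%R <= M)%E) ->
  f a @[a --> 0^'+] --> f 0.
Proof.
move=> f_nonincr f0_le.
have pos_itv a : a \in `]0, +oo[ = (0 < a) by rewrite in_itv /= andbT.
suff -> : f 0 = ereal_sup (f @` [set` `]0, +oo[]).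
  apply: nonincreasing_at_right_cvge => // a b.
  by rewrite !pos_itv => a0 _ ab; apply: f_nonincr => //; exact: ltW.
apply/eqP; rewrite eq_le; apply/andP; split.
  apply: f0_le => a a0; apply: ereal_sup_ubound.
  by exists a => //; rewrite /= pos_itv.
apply: ge_ereal_sup => _ [a /= + <-]; rewrite pos_itv => a0.
by apply: f_nonincr => //; exact: ltW.
Qed.

Section Chains.
Variables (R : realType) (d1 d2 : nat).
Local Notation pt := (pt R d1 d2).
Implicit Types (a e : R) (z : pt) (X : set pt).

Local Notation margin a := (a `^ (d1%:R^-1)).

(* geometric part of "s is a chain from 0 to z": [is_chain X a z s] is
   [(forall w, w \in s -> X w) /\ shape a z s] by definition *)
Definition shape (a : R) (z : pt) (s : seq pt) : Prop :=
  match s with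
  | [::] => True
  | w :: s' => preceq (origin R d1 d2) w /\ linked a w s' z
  end.

Lemma margin_le a b : 0 <= a -> a <= b -> margin a <= margin b.
Proof.
move=> a0 ab; apply: ge0_ler_powR => //; rewrite ?nnegrE ?invr_ge0 ?ler0n //.
exact: le_trans a0 ab.
Qed.

Lemma linked_mono a b (z : pt) s : margin a <= margin b ->
  forall w : pt, linked b w s z -> linked a w s z.
Proof.
have prec_mono (w y : pt) : margin a <= margin b ->
    prec_alpha b w y -> prec_alpha a w y.
  by move=> ab h i; apply: le_lt_trans (h i); rewrite lerD2l.
move=> ab; elim: s => [|y s IH] w /=; first exact: prec_mono.
by move=> [h1 h2]; split; [exact: prec_mono h1|exact: IH].
Qed.

Lemma S_C_mono (X : set pt) a b (z : pt) : margin a <= margin b ->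
  (S_C X b z <= S_C X a z)%E.
Proof.
move=> ab; apply: ge_ereal_sup => _ [s [Xs sh] <-].
apply: ereal_sup_ubound; exists s => //; split => //.
by case: s {Xs} sh => [|w s] //= [? /(linked_mono ab)].
Qed.

(* the empty chain has value 0 *)
Lemma S_C_ge0 (X : set pt) a zr : (0 <= S_C X a (ptR d2 zr))%E.
Proof.
apply: ereal_sup_ubound; exists [::]; first by split.
by rewrite /Vchain /= /l1Z subr0 big1 ?sub0r ?oppr0 // => i _; rewrite mxE.
Qed.

Definition perturb (e : R) (p q : pt) : Prop :=
  [/\ forall i : 'I_d1, `|p.1 ord0 i - q.1 ord0 i| < e,
      forall i : 'I_d1, 0 <= q.1 ord0 i -> 0 <= p.1 ord0 i
    & p.2 = q.2].

Lemma perturb_le e e' p q : e <= e' -> perturb e p q -> perturb e' p q.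
Proof. by move=> ee [h1 h2 h3]; split=> // i; exact: lt_le_trans (h1 i) ee. Qed.

Lemma perturb_refl e (p : pt) : 0 < e -> perturb e p p.
Proof. by move=> e0; split => // i; rewrite subrr normr0. Qed.

Lemma prec_open a (w y : pt) : prec_alpha a w y ->
  exists2 e, 0 < e & forall b w' y', margin b < margin a + e ->
    perturb e w' w -> perturb e y' y -> prec_alpha b w' y'.
Proof.
move=> h.
pose gap i := (y.1 ord0 i - (w.1 ord0 i + margin a)) / 3.
have [|e e0 He] := @finite_pos_lower_bound R d1 gap.
  by move=> i; rewrite divr_gt0 // subr_gt0; exact: h.
exists e => // b w' y' hb [hw _ _] [hy _ _] i.
have := He i; have := h i; have := hw i; have := hy i; rewrite /gap !ltr_norml.
move=> /andP[hy1 _] /andP[_ hw2]; lra.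
Qed.

Lemma linked_open a z s : forall w, linked a w s z ->
  exists2 e, 0 < e & forall b w' s', margin b < margin a + e ->
    perturb e w' w -> pointwise (perturb e) s' s -> linked b w' s' z.
Proof.
elim: s => [|y s IH] w /=.
  move=> /prec_open[e e0 He]; exists e => // b w' [|//] hb hw _.
  by apply: He => //; exact: perturb_refl.
move=> [/prec_open[e1 e10 He1] /IH[e2 e20 He2]].
exists (Order.min e1 e2); first by rewrite lt_min e10 e20.
have le1 : Order.min e1 e2 <= e1 by rewrite ge_min lexx.
have le2 : Order.min e1 e2 <= e2 by rewrite ge_min lexx orbT.
move=> b w' [//|y' s'] hb hw [hy hs]; split.
  apply: He1; [|exact: perturb_le hw|exact: perturb_le hy].
  by apply: lt_le_trans hb _; rewrite lerD2l.
apply: He2; [|exact: perturb_le hy|].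
  by apply: lt_le_trans hb _; rewrite lerD2l.
by apply: pointwise_impl hs => p q; exact: perturb_le.
Qed.

Lemma shape_open a z s : shape a z s ->
  exists2 e, 0 < e & forall b s', margin b < margin a + e ->
    pointwise (perturb e) s' s -> shape b z s'.
Proof.
case: s => [_|w s [w0 /linked_open[e e0 He]]]; first by exists 1 => // b [|].
exists e => // b [//|w' s'] hb [hw hs]; split; last exact: He.
have [_ keep0 _] := hw; move=> i; have := w0 i; rewrite /origin /= !mxE.
exact: keep0.
Qed.

Lemma Vfrom_lattice (prev prev' : pt) s t z : prev.2 = prev'.2 ->
  map snd s = map snd t -> Vfrom prev s z = Vfrom prev' t z.
Proof.
elim: s prev prev' t => [|w s IH] prev prev' [|w' t] //= e.
  by rewrite e.
by case=> ew es; rewrite e ew (IH w w' t ew es).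
Qed.

(* A code is a half-open box with rational corners and a lattice part;
   codes form a countable type. *)
Definition code := ('rV[rat]_d1 * 'rV[rat]_d1 * 'rV[int]_d2)%type.

Definition box_of (b : code) : box R d1 d2 :=
  Box (map_mx (@ratr R) b.1.1) (map_mx (@ratr R) b.1.2) b.2.

Lemma rat_interval_around (x e : R) : 0 < e -> exists qq : rat * rat,
  [/\ x - e < ratr qq.1, ratr qq.1 <= x, x < ratr qq.2, ratr qq.2 < x + e
    & (0 <= x -> 0 <= (ratr qq.1 : R))].
Proof.
move=> e0.
have [q2] : exists q2 : rat, (ratr q2 : R) \in `]x, x + e[.
  by apply: rat_in_itvoo; rewrite ltrDl.
rewrite in_itv /= => /andP[x_q2 q2_xe].
have [/andP[x0 x_e]|] := boolP ((0 <= x) && (x - e < 0)).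
  by exists (0, q2); rewrite /= rmorph0; split.
rewrite negb_and -!ltNge -leNgt => x0e.
have [q1] : exists q1 : rat, (ratr q1 : R) \in `]x - e, x[.
  by apply: rat_in_itvoo; rewrite gtrBl.
rewrite in_itv /= => /andP[xe_q1 q1_x].
exists (q1, q2); split => //=; first exact: ltW.
by move=> x0; case/orP: x0e; lra.
Qed.

Lemma box_around (w : pt) e : 0 < e -> exists b : code,
  box_set (box_of b) w /\ forall p, box_set (box_of b) p -> perturb e p w.
Proof.
move=> e0.
have [f Hf] := choice (fun i : 'I_d1 => rat_interval_around (w.1 ord0 i) e0).
exists (\row_i (f i).1, \row_i (f i).2, w.2); split.
  by split => //= i; rewrite !mxE; have [_ -> -> _ _] := Hf i.
move=> p [/= hp hp2]; split => // i; have := hp i; rewrite !mxE => /andP[h1 h2];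
  have [a1 a2 b1 b2 keep0] := Hf i.
- by rewrite ltr_norml; apply/andP; split; lra.
- by move=> /keep0; lra.
Qed.

Definition selects (ps : seq pt) (c : seq code) : Prop :=
  pointwise (fun p b => box_set (box_of b) p) ps c.

Definition code_pt (b : code) : pt := (box_a (box_of b), b.2).

Lemma selects_lattice ps c : selects ps c -> map snd ps = map snd (map code_pt c).
Proof.
move=> sel; rewrite -map_comp; apply: pointwise_map.
by apply: pointwise_impl sel => p b [_ ->].
Qed.

Definition good a z (c : seq code) : Prop := forall ps, selects ps c -> shape a z ps.

Definition hits X (c : seq code) : Prop :=
  forall b, b \in c -> X `&` box_set (box_of b) !=set0.

Definition code_value z (c : seq code) : R :=
  (size c)%:R - Vchain (map code_pt c) z.

Lemma selection_value ps c z : selects ps c ->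
  (size ps)%:R - Vchain ps z = code_value z c.
Proof.
move=> sel; rewrite /code_value (pointwise_size sel); congr (_ - _).
exact/Vfrom_lattice/selects_lattice.
Qed.

Lemma chain_to_code X a z s : is_chain X a z s ->
  exists c, [/\ good a z c, hits X c & code_value z c = (size s)%:R - Vchain s z].
Proof.
move=> [Xs /shape_open[e e0 He]].
have [c Hc] := pointwise_exists (fun w => box_around w e0) s.
have sel : selects s c by apply: pointwise_impl Hc => w b [].
exists c; split; last by rewrite (selection_value z sel).
- move=> ps hps; apply: He; first by rewrite ltrDl.
  by apply: pointwise_trans hps Hc => p w b hp [_ /(_ p hp)].
- move=> b /(pointwise_mem Hc) [w ws [wb _]].
  by exists w; split => //; exact: Xs.
Qed.

Lemma code_to_chain X a z c : good a z c -> hits X c ->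
  exists s, is_chain X a z s /\ (size s)%:R - Vchain s z = code_value z c.
Proof.
move=> gc hc.
suff [ps [sel Xps]] : exists ps, selects ps c /\ forall p, p \in ps -> X p.
  by exists ps; split; [split => //; exact: gc | exact: selection_value].
elim: c {gc} hc => [|b c IH] h; first by exists [::].
have [|ps [sel Xps]] := IH.
  by move=> b' bc; apply: h; rewrite in_cons bc orbT.
have [p [Xp bp]] := h b (mem_head _ _).
exists (p :: ps); split => // q; rewrite in_cons => /orP[/eqP ->//|]; exact: Xps.
Qed.

(* Enumerating codes through [unpickle] expresses S^C as a countable
   supremum; the k-th term only depends on which boxes are hit by X. *)
Definition code_term a z X (k : nat) : \bar R :=
  if unpickle k is Some c then
    if `[< good a z c /\ hits X c >] then (code_value z c)%:E else -oo%E
  else -oo%E.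

Lemma S_C_countable X a z : S_C X a z = ereal_sup (range (code_term a z X)).
Proof.
apply/eqP; rewrite eq_le; apply/andP; split.
  apply: ge_ereal_sup => _ [s /chain_to_code[c [gc hc vc]] <-].
  apply: ereal_sup_ubound; exists (pickle c) => //.
  by rewrite /code_term pickleK asboolT // vc.
apply: ge_ereal_sup => _ [k _ <-]; rewrite /code_term.
case: unpickle => [c|]; last by rewrite leNye.
case: asboolP => [[/code_to_chain gc /gc[s [Hs vs]]]|_]; last by rewrite leNye.
by apply: ereal_sup_ubound; exists s => //; rewrite vs.
Qed.

(* with d1 > 0 the spacing alpha^{1/d1} vanishes at alpha = 0 *)
Hypothesis d1_gt0 : (0 < d1)%N.

Lemma margin0 : margin (0 : R) = 0.
Proof. by rewrite powR0 // invr_eq0 pnatr_eq0 -lt0n. Qed.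

Lemma chain0_stable X z s : is_chain X 0 z s ->
  exists2 e, 0 < e & forall b, margin b < e -> is_chain X b z s.
Proof.
move=> [Xs /shape_open[e e0 He]]; exists e => // b hb; split => //.
apply: He; first by rewrite margin0 add0r.
by apply: pointwise_refl => p; exact: perturb_refl.
Qed.

(* spacings alpha_n = (n+1)^{-d1}, so that margin alpha_n = 1/(n+1) *)
Definition alpha_seq (n : nat) : R := (n.+1%:R^-1) ^+ d1.

Lemma alpha_seq_gt0 n : 0 < alpha_seq n.
Proof. by rewrite /alpha_seq exprn_gt0 // invr_gt0 ltr0n. Qed.

Lemma margin_alpha_seq n : margin (alpha_seq n) = n.+1%:R^-1.
Proof.
have h0 : 0 <= (n.+1%:R^-1 : R) by rewrite invr_ge0 ler0n.
rewrite /alpha_seq -powR_mulrn // -powRrM mulfV ?powRr1 //.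
by rewrite pnatr_eq0 -lt0n.
Qed.

Lemma S_C_alpha_seq_nondecr X z :
  {homo (fun n => S_C X (alpha_seq n) z) : n m / (n <= m)%N >-> (n <= m)%E}.
Proof.
move=> n m nm; apply: S_C_mono; rewrite !margin_alpha_seq.
by rewrite lef_pV2 ?posrE ?ltr0n // ler_nat.
Qed.

Lemma S_C0_sup X z :
  S_C X 0 z = ereal_sup (range (fun n => S_C X (alpha_seq n) z)).
Proof.
apply/eqP; rewrite eq_le; apply/andP; split; last first.
  apply: ge_ereal_sup => _ [n _ <-]; apply: S_C_mono.
  exact/margin_le/ltW/alpha_seq_gt0.
apply: ge_ereal_sup => _ [s /chain0_stable[e e0 He] <-].
have [N _ HN] := near_infty_natSinv_lt (PosNum e0).
apply: (@le_trans _ _ (S_C X (alpha_seq N) z)).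
  apply: ereal_sup_ubound; exists s => //; apply: He.
  by rewrite margin_alpha_seq; exact: (HN N (leqnn N)).
by apply: ereal_sup_ubound; exists N.
Qed.

End Chains.

Section PoissonChains.
Variables (R : realType) (d1 d2 : nat) (dm : measure_display).
Variables (Omega : measurableType dm) (P : probability Omega R).
Variable xi : Omega -> set (pt R d1 d2).
Hypothesis xi_PPP : is_PPP P xi.
Local Notation pt := (pt R d1 d2).
Local Open Scope ereal_scope.

Lemma count_pts0 (X A : set pt) : count_pts X A = 0 <-> X `&` A = set0.
Proof.
split; last by rewrite /count_pts => ->; rewrite esum_set0.
move=> h; apply/seteqP; split => // x Xx; exfalso.
have : 1 <= count_pts X A.
  apply: esum_ge; exists [set x]; last by rewrite fsbig_set1.
  by split; [exact: finite_set1 | move=> y ->].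
by rewrite h lee_fin ler10.
Qed.

(* "xi meets the box B" is an event: its complement is {N(B) = 0}. *)
Lemma measurable_meets (B : box R d1 d2) :
  measurable [set w | xi w `&` box_set B !=set0].
Proof.
have disj (i j : 'I_1) : i != j -> box_set B `&` box_set B = set0.
  by rewrite !ord1 eqxx.
have [mE _] := xi_PPP (fun _ => 0%N) disj.
set E := [set w | _] in mE.
suff -> : [set w | xi w `&` box_set B !=set0] = ~` E by exact: measurableC.
apply/seteqP; split => w /=.
  by move=> [x hx] /(_ ord0) /count_pts0 h; have : set0 x by rewrite -h.
move=> hE; apply/set0P/eqP => h; apply: hE => i.
exact/(count_pts0 (xi w)).
Qed.

Lemma measurable_hits (c : seq (code d1 d2)) : measurable [set w | hits (xi w) c].
Proof.
elim: c => [|b c IH].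
  by rewrite (_ : [set w | _] = setT); [exact: measurableT|apply/seteqP; split].
rewrite (_ : [set w | _] = [set w | xi w `&` box_set (box_of R b) !=set0]
   `&` [set w | hits (xi w) c]); first exact: measurableI (measurable_meets _) IH.
apply/seteqP; split => w /=.
  move=> h; split; first by apply: h; rewrite mem_head.
  by move=> b' bc; apply: h; rewrite in_cons bc orbT.
move=> [h1 h2] b'; rewrite in_cons => /orP[/eqP ->//|]; exact: h2.
Qed.

Lemma measurable_S_C a (z : pt) : measurable_fun setT (fun w => S_C (xi w) a z).
Proof.
have -> : (fun w => S_C (xi w) a z) =
    (fun w => esups ((fun k w => code_term a z (xi w) k) ^~ w) 0%N).
  apply/funext => w; rewrite S_C_countable /esups /sdrop /=; congr ereal_sup.
  by apply/seteqP; split => _ [k _ <-]; exists k.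
apply: measurable_fun_esups => k.
rewrite /code_term; case: unpickle => [c|]; last exact: measurable_cst.
have [gc|ngc] := pselect (good a z c); last first.
  rewrite (_ : (fun _ => _) = cst -oo); first exact: measurable_cst.
  by apply/funext => w; rewrite asboolF // => -[].
rewrite (_ : (fun _ => _) =
    (fun w => if `[< hits (xi w) c >] then (code_value z c)%:E else -oo)).
  apply: measurable_fun_ifT; [|exact: measurable_cst|exact: measurable_cst].
  apply: (measurable_fun_bool true); rewrite setTI.
  rewrite (_ : _ @^-1` _ = [set w | hits (xi w) c]); first exact: measurable_hits.
  by apply/seteqP; split => w /=; move/asboolP.
apply/funext => w; case: asboolP => [[_ h]|h]; first by rewrite asboolT.
by rewrite asboolF // => h'; apply: h.
Qed.

Local Notation ES a zr := (ES_C P xi a (ptR d2 zr)).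

Lemma ES_C_nonincr (a b : R) zr : (0 <= a)%R -> (a <= b)%R -> ES b zr <= ES a zr.
Proof.
move=> a0 ab; apply: ge0_le_integral => //.
- by move=> w _; exact: S_C_ge0.
- exact: measurable_S_C.
- exact: measurable_S_C.
- by move=> w _; apply: S_C_mono; exact: margin_le.
Qed.

(* Monotone convergence along alpha_n gives E[S^C_0] = sup_{a > 0} E[S^C_a]. *)
Lemma ES_C0_le (d1_gt0 : (0 < d1)%N) zr M :
  (forall a, (0 < a)%R -> ES a zr <= M) -> ES 0 zr <= M.
Proof.
move=> hM.
pose g n w := S_C (xi w) (alpha_seq R d1 n) (ptR d2 zr).
have g_nd w : {homo g^~ w : n m / (n <= m)%N >-> n <= m}.
  exact: S_C_alpha_seq_nondecr.
have := @monotone_convergence _ _ _ P setT measurableT g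
  (fun n => measurable_S_C _ _) (fun n w _ => S_C_ge0 _ _ _) (fun w _ => g_nd w).
have -> : (fun w => limn (g ^~ w)) = fun w => S_C (xi w) 0 (ptR d2 zr).
  apply/funext => w; rewrite S_C0_sup //; apply: cvg_lim => //.
  exact: ereal_nondecreasing_cvgn.
rewrite /ES_C => ->; apply: lime_le.
  apply: ereal_nondecreasing_is_cvgn => n m nm.
  apply: ge0_le_integral => //.
  - by move=> w _; exact: S_C_ge0.
  - exact: measurable_S_C.
  - exact: measurable_S_C.
  - by move=> w _; exact: g_nd.
by apply: nearW => n; apply: hM; exact: alpha_seq_gt0.
Qed.

Lemma sigma_C_nonincr (a b : R) zr : (0 <= a)%R -> (a <= b)%R ->
  sigma_C P xi b zr <= sigma_C P xi a zr.
Proof.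
move=> a0 ab; apply: ge_ereal_sup => _ [lam lam0 <-].
apply: (@le_trans _ _ ((lam^-1)%:E * ES a (lam *: zr))).
  by apply: lee_wpmul2l; [rewrite lee_fin invr_ge0 ltW|exact: ES_C_nonincr].
by apply: ereal_sup_ubound; exists lam.
Qed.

(* sigma^C_0 = sup_{a > 0} sigma^C_a, by exchanging the two suprema. *)
Lemma sigma_C0_le (d1_gt0 : (0 < d1)%N) zr M :
  (forall a, (0 < a)%R -> sigma_C P xi a zr <= M) -> sigma_C P xi 0 zr <= M.
Proof.
move=> hM; apply: ge_ereal_sup => _ [lam lam0 <-].
rewrite lee_pdivrMl //; apply: ES_C0_le => // a a0.
rewrite -lee_pdivrMl //; apply: le_trans (hM a a0).
by apply: ereal_sup_ubound; exists lam.
Qed.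

End PoissonChains.

Theorem mainTheorem9 (R : realType) (d1 d2 : nat) (dm : measure_display)
  (Omega : measurableType dm) (P : probability Omega R)
  (xi : Omega -> set (pt R d1 d2)) (zr : 'rV[R]_d1) :
  (0 < d1)%N ->
  is_PPP P xi ->
  (forall i : 'I_d1, 0 < zr ord0 i) ->
  [/\ (forall alpha beta : R, 0 <= alpha -> alpha <= beta ->
         (ES_C P xi beta (ptR d2 zr) <= ES_C P xi alpha (ptR d2 zr))%E),
      (forall alpha beta : R, 0 <= alpha -> alpha <= beta ->
         (sigma_C P xi beta zr <= sigma_C P xi alpha zr)%E),
      ES_C P xi alpha (ptR d2 zr) @[alpha --> 0^'+] --> ES_C P xi 0 (ptR d2 zr)
    & sigma_C P xi alpha zr @[alpha --> 0^'+] --> sigma_C P xi 0 zr].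
Proof.
move=> d1_gt0 xi_PPP _; split.
- by move=> a b; exact: ES_C_nonincr.
- by move=> a b; exact: sigma_C_nonincr.
- apply: nonincr_cvg_at_right0 => [a b|M]; first exact: ES_C_nonincr.
  exact: ES_C0_le.
- apply: nonincr_cvg_at_right0 => [a b|M]; first exact: sigma_C_nonincr.
  exact: sigma_C0_le.
Qed.
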